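(* Let $R$ be a hyperring, $\mathcal{SR}(R)$ the set of strongly regular relations on $R$ ordered by inclusion, and $\mathcal I(\gamma^*(0))$ the set of hyperideals of $R$ containing $\gamma^*(0)$ ordered by inclusion. Then the map $f:\mathcal{SR}(R)\to\mathcal I(\gamma^*(0))$, $f(\rho)=\rho(0)$, is well defined and is an isomorphism of complete lattices, with inverse $g(I)=\rho_I=\{(x,y)\in R^2: x+I=y+I\}$ (in particular $\rho_I$ is strongly regular for each $I\in\mathcal I(\gamma^*(0))$, $\rho_I(0)=I$, and $\rho_{\rho(0)}=\rho$).
   Context: Standing conventions. A hyperring means a commutative Krasner hyperring with identity: a set $R$ with a hyperoperation $+:R\times R\to\mathcal P^*(R)$ (nonempty subsets; for subsets $A,B$ one sets $A+B=\bigcup_{a\in A,b\in B}a+b$) and a binary operation $\cdot$ such that: $+$ is associative and commutative; there is $0\in R$ with $0+x=\{x\}$ for all $x$; every $x$ has a unique $-x$ with $0\in x+(-x)$; $z\in x+y$ implies $y\in -x+z$ and $x\in z-y$; $(R,\cdot)$ is a commutative monoid with identity $1$; $0\cdot x=0$; and $x(y+z)=xy+xz$. A hyperideal of $R$ is a nonempty $I\subseteq R$ with $a-b\subseteq I$ and $ra\in I$ for all $a,b\in I$, $r\in R$; $x+I=\bigcup_{y\in I}(x+y)$. An equivalence relation $\rho$ on $R$ is strongly regular if whenever $(a,b)\in\rho$ and $(c,d)\in\rho$, then $(u,v)\in\rho$ for all $u\in a+c$, $v\in b+d$, and $(ac,bd)\in\rho$; $\rho(x)$ denotes the $\rho$-class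 of $x$. Let $\mathcal U$ be the set of all finite sums of finite products of elements of $R$ (each such sum is a subset of $R$). The relation $\gamma^*$ is defined by $(a,b)\in\gamma^*$ iff there exist $a=z_1,z_2,\dots,z_{n+1}=b$ in $R$ and $U_1,\dots,U_n\in\mathcal U$ with $\{z_i,z_{i+1}\}\subseteq U_i$ for all $i$; it is the smallest strongly regular relation on $R$, and $\gamma^*(0)$ is the $\gamma^*$-class of $0$. *)

From Stdlib Require Import List Relations.
Import ListNotations.
Unset Implicit Arguments.

Definition subset (T : Type) := T -> Prop.
Definition set_incl (T : Type) (A B : subset T) := forall x, A x -> B x.
Definition rel_incl (T : Type) (r s : T -> T -> Prop) := forall x y, r x y -> s x y.

(* Commutative Krasner hyperring with identity.
   [hadd x y z] means z \in x + y. *)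
Record hyperring := Hyperring {
  carrier :> Type;
  hadd : carrier -> carrier -> carrier -> Prop;
  hmul : carrier -> carrier -> carrier;
  hzero : carrier;
  hone : carrier;
  hneg : carrier -> carrier;
  hadd_nonempty : forall x y, exists z, hadd x y z;
  hadd_assoc : forall x y z w,
    (exists u, hadd x y u /\ hadd u z w) <-> (exists v, hadd y z v /\ hadd x v w);
  hadd_comm : forall x y z, hadd x y z <-> hadd y x z;
  hadd_zero : forall x z, hadd hzero x z <-> z = x;
  hneg_inv : forall x, hadd x (hneg x) hzero;
  hneg_unique : forall x y, hadd x y hzero -> y = hneg x;
  hadd_revers : forall x y z, hadd x y z -> hadd (hneg x) z y /\ hadd z (hneg y) x;
  hmul_assoc : forall x y z, hmul x (hmul y z) = hmul (hmul x y) z;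
  hmul_comm : forall x y, hmul x y = hmul y x;
  hmul_one : forall x, hmul hone x = x;
  hmul_zero : forall x, hmul hzero x = hzero;
  hmul_distr : forall x y z w,
    (exists u, hadd y z u /\ w = hmul x u) <-> hadd (hmul x y) (hmul x z) w
}.

Section Defs.
Variable R : hyperring.

Definition setadd (A B : subset R) : subset R :=
  fun w => exists a b, A a /\ B b /\ hadd R a b w.

Definition singleton (a : R) : subset R := fun w => w = a.

Definition coset (x : R) (I : subset R) : subset R :=
  fun w => exists y, I y /\ hadd R x y w.

Definition hyperideal (I : subset R) : Prop :=
  (exists a, I a) /\
  (forall a b, I a -> I b -> forall w, hadd R a (hneg R b) w -> I w) /\
  (forall r a, I a -> I (hmul R r a)).

Definition equivalence_rel (rho : R -> R -> Prop) : Prop :=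
  (forall x, rho x x) /\ (forall x y, rho x y -> rho y x) /\
  (forall x y z, rho x y -> rho y z -> rho x z).

Definition strongly_regular (rho : R -> R -> Prop) : Prop :=
  equivalence_rel rho /\
  (forall a b c d, rho a b -> rho c d ->
     (forall u v, hadd R a c u -> hadd R b d v -> rho u v) /\
     rho (hmul R a c) (hmul R b d)).

Definition rho_of (I : subset R) : R -> R -> Prop :=
  fun x y => forall w, coset x I w <-> coset y I w.

Definition hprod (s : list R) : R := fold_right (hmul R) (hone R) s.

Fixpoint sumlist (a : R) (s : list R) : subset R :=
  match s with
  | [] => singleton a
  | b :: s' => setadd (singleton a) (sumlist b s')
  end.

Definition in_U (U : subset R) : Prop :=
  exists (p : list R) (ps : list (list R)),
    forall w, U w <-> sumlist (hprod p) (map hprod ps) w.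

Definition gamma (x y : R) : Prop :=
  exists U, in_U U /\ U x /\ U y.

Definition gamma_star : R -> R -> Prop := clos_trans R gamma.

Definition gamma_star0 : subset R := gamma_star (hzero R).

Definition is_lub (T : Type) (le : T -> T -> Prop) (P S : T -> Prop) (m : T) :=
  P m /\ (forall s, S s -> le s m) /\ (forall u, P u -> (forall s, S s -> le s u) -> le m u).

Definition is_glb (T : Type) (le : T -> T -> Prop) (P S : T -> Prop) (m : T) :=
  P m /\ (forall s, S s -> le m s) /\ (forall u, P u -> (forall s, S s -> le u s) -> le u m).

End Defs.

(** Everything is read off the class of 0.  For a strongly regular [rho],
    [x rho y] holds iff [x ∈ y + i] for some [i rho 0] (take [i ∈ -y + x]),
    so [rho] is the relation [rho_I] of the hyperideal [I = rho(0)], and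
    [gamma* ⊆ rho] because [gamma*] is the least strongly regular relation.
    Conversely, for a hyperideal [I ⊇ gamma*(0)], [rho_I] is "[x ∈ y + I]";
    it is compatible with sums because two elements [p, v] of one sum [b + d]
    lie in a common member of [U], so every [e ∈ p - v] is in [gamma*(0) ⊆ I].
    Both families are closed under arbitrary intersections, which makes them
    complete lattices. *)

From Stdlib Require Import List Relations.
Import ListNotations.

Section CompleteLattice.
Variables (T : Type) (le : T -> T -> Prop) (meet : (T -> Prop) -> T).
Hypothesis meet_lb : forall F s, F s -> le (meet F) s.
Hypothesis meet_glb : forall F u, (forall s, F s -> le u s) -> le u (meet F).
Variable P : T -> Prop.
Hypothesis P_meet : forall F, (forall s, F s -> P s) -> P (meet F).

Lemma meet_closed_is_glb (S : T -> Prop) :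
  (forall s, S s -> P s) -> is_glb T le P S (meet S).
Proof. intros HS; repeat split; auto. Qed.

Lemma meet_closed_is_lub (S : T -> Prop) :
  is_lub T le P S (meet (fun u => P u /\ forall s, S s -> le s u)).
Proof.
  repeat split.
  - apply P_meet; intros u [Pu _]; exact Pu.
  - intros s Ss; apply meet_glb; intros u [_ Hu]; auto.
  - intros u Pu Hu; apply meet_lb; auto.
Qed.

Lemma meet_closed_complete (S : T -> Prop) : (forall s, S s -> P s) ->
  (exists m, is_lub T le P S m) /\ (exists m, is_glb T le P S m).
Proof.
  intros HS; split; eexists; [apply meet_closed_is_lub | apply meet_closed_is_glb, HS].
Qed.
End CompleteLattice.

Section Hyperring.
Variable R : hyperring.
Notation add := (hadd R).
Notation neg := (hneg R).
Notation mul := (hmul R).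
Notation zero := (hzero R).

Lemma hnegK x : neg (neg x) = x.
Proof. symmetry; apply hneg_unique, hadd_comm, hneg_inv. Qed.

Lemma hadd0l x : add zero x x.
Proof. apply hadd_zero; reflexivity. Qed.

Lemma hadd0r x : add x zero x.
Proof. apply hadd_comm, hadd0l. Qed.

Lemma hmul0r r : mul r zero = zero.
Proof. rewrite hmul_comm; apply hmul_zero. Qed.

Lemma hadd_assocLR x y z u w :
  add x y u -> add u z w -> exists v, add y z v /\ add x v w.
Proof. intros H1 H2; apply (hadd_assoc R x y z w); eauto. Qed.

Lemma hadd_assocRL x y z v w :
  add y z v -> add x v w -> exists u, add x y u /\ add u z w.
Proof. intros H1 H2; apply (hadd_assoc R x y z w); eauto. Qed.

Lemma hadd_exchange a b c d x y u :
  add a b x -> add c d y -> add x y u ->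
  exists p q, add a c p /\ add b d q /\ add p q u.
Proof.
  intros Hx Hy Hu.
  destruct (hadd_assocLR _ _ _ _ _ Hx Hu) as [v [Hbyv Hav]].
  destruct (hadd_assocRL _ _ _ _ _ Hy Hbyv) as [t [Hbct Htd]].
  apply hadd_comm in Hbct.
  destruct (hadd_assocLR _ _ _ _ _ Hbct Htd) as [q [Hbdq Hcq]].
  destruct (hadd_assocRL _ _ _ _ _ Hcq Hav) as [p [Hacp Hpq]].
  exists p, q; auto.
Qed.

Lemma hadd_subK x y w : add x (neg y) w -> add y w x.
Proof. intros H; apply hadd_comm; rewrite <- (hnegK y); apply (hadd_revers R _ _ _ H). Qed.

Section Hyperideal.
Variable I : subset R.
Hypothesis HI : hyperideal R I.

Lemma hyperideal0 : I zero.
Proof. destruct HI as [[a Ia] [Hsub _]]; apply (Hsub a a Ia Ia), hneg_inv. Qed.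

Lemma hyperidealN a : I a -> I (neg a).
Proof. intros Ia; destruct HI as [_ [Hsub _]]; apply (Hsub zero a hyperideal0 Ia), hadd0l. Qed.

Lemma hyperidealD a b w : I a -> I b -> add a b w -> I w.
Proof.
  intros Ia Ib Hw; destruct HI as [_ [Hsub _]].
  apply (Hsub a (neg b) Ia (hyperidealN b Ib)); rewrite hnegK; exact Hw.
Qed.

Lemma hyperidealM r a : I a -> I (mul r a).
Proof. destruct HI as [_ [_ Hmul]]; apply Hmul. Qed.

Lemma rho_ofP x y : rho_of R I x y <-> exists i, I i /\ add y i x.
Proof.
  split.
  - intros H; destruct (proj1 (H x)) as [i [Ii Hi]]; eauto.
    exists zero; split; [apply hyperideal0 | apply hadd0r].
  - intros [i [Ii Hyix]] w; split.
    + intros [j [Ij Hxjw]].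
      destruct (hadd_assocLR _ _ _ _ _ Hyix Hxjw) as [k [Hijk Hykw]].
      exists k; split; [apply (hyperidealD i j) |]; auto.
    + intros [j [Ij Hyjw]].
      destruct (hadd_revers R _ _ _ Hyix) as [_ Hx_iy].
      destruct (hadd_assocLR _ _ _ _ _ Hx_iy Hyjw) as [k [Hijk Hxkw]].
      exists k; split; [apply (hyperidealD (neg i) j); [apply hyperidealN | |] |]; auto.
Qed.

Lemma rho_of_zero x : rho_of R I zero x <-> I x.
Proof.
  assert (Hsym : rho_of R I x zero <-> rho_of R I zero x)
    by (split; intros H w; split; apply H).
  rewrite <- Hsym, rho_ofP; split.
  - intros [i [Ii H]]; apply hadd_zero in H; subst; exact Ii.
  - intros Ix; exists x; split; [exact Ix | apply hadd0l].
Qed.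
End Hyperideal.

Lemma hprod1 z : hprod R [z] = z.
Proof. unfold hprod; simpl; rewrite hmul_comm; apply hmul_one. Qed.

Lemma sumlist_rcons a s c w :
  setadd R (sumlist R a s) (singleton R c) w -> sumlist R a (s ++ [c]) w.
Proof.
  revert a w; induction s as [|b s IH]; intros a w H; [exact H |].
  destruct H as [x [c' [[a' [t [Ha [Ht Hatx]]]] [Hc Hxcw]]]].
  unfold singleton in Ha, Hc; subst.
  destruct (hadd_assocLR _ _ _ _ _ Hatx Hxcw) as [v [Htcv Hav]].
  exists a, v; repeat split; auto.
  apply IH; exists t, c; repeat split; auto.
Qed.

Lemma gamma_hadd b d v v' : add b d v -> add b d v' -> gamma R v v'.
Proof.
  intros Hv Hv'; exists (sumlist R (hprod R [b]) [hprod R [d]]); split.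
  - exists [b], [[d]]; intros w; apply iff_refl.
  - rewrite !hprod1; split; exists b, d; repeat split; auto.
Qed.

(* Adding the summand [-y] to a member of [U] containing [x, y] gives a member
   of [U] containing both [0 ∈ y - y] and [w]. *)
Lemma gamma_zero_sub x y w : gamma R x y -> add x (neg y) w -> gamma R zero w.
Proof.
  intros [U [[p [ps HU]] [Ux Uy]]] Hw.
  exists (sumlist R (hprod R p) (map (hprod R) (ps ++ [[neg y]]))); split.
  - exists p, (ps ++ [[neg y]]); intros w'; apply iff_refl.
  - rewrite map_app; change (map (hprod R) [[neg y]]) with [hprod R [neg y]].
    rewrite hprod1; split; apply sumlist_rcons.
    + exists y, (neg y); repeat split; [apply HU; exact Uy | apply hneg_inv].
    + exists x, (neg y); repeat split; [apply HU; exact Ux | exact Hw].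
Qed.

Definition gamma_closed (I : subset R) : Prop :=
  hyperideal R I /\ set_incl R (gamma_star0 R) I.

Lemma gamma_closed_coset I x y : gamma_closed I -> gamma R x y ->
  exists e, I e /\ add y e x.
Proof.
  intros [_ HgI] Hxy; destruct (hadd_nonempty R x (neg y)) as [e He].
  exists e; split.
  - apply HgI, t_step, (gamma_zero_sub x y); assumption.
  - apply hadd_subK; exact He.
Qed.

Lemma rho_of_strongly_regular I : gamma_closed I -> strongly_regular R (rho_of R I).
Proof.
  intros HIg; pose proof (proj1 HIg) as HI.
  split; [split; [| split] |].
  - intros x w; apply iff_refl.
  - intros x y H w; split; apply H.
  - intros x y z Hxy Hyz w; rewrite (Hxy w); apply Hyz.
  - intros a b c d Hab Hcd.
    apply (rho_ofP I HI) in Hab; destruct Hab as [i [Ii Hbia]].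
    apply (rho_ofP I HI) in Hcd; destruct Hcd as [j [Ij Hdjc]].
    split.
    + intros u v Hu Hv; apply (rho_ofP I HI).
      destruct (hadd_exchange _ _ _ _ _ _ _ Hbia Hdjc Hu) as [p [q [Hp [Hq Hpq]]]].
      destruct (gamma_closed_coset I p v HIg (gamma_hadd _ _ _ _ Hp Hv))
        as [e [Ie Hvep]].
      destruct (hadd_assocLR _ _ _ _ _ Hvep Hpq) as [k [Hk Hvk]].
      exists k; split; [apply (hyperidealD I HI e q); [| apply (hyperidealD I HI i j) |] |];
        auto.
    + apply (rho_ofP I HI).
      (* [ac ∈ bc + ic ⊆ (bd + bj) + ic = bd + (bj + ic)] by distributivity *)
      assert (Hca : add (mul b c) (mul i c) (mul a c)).
      { rewrite !(hmul_comm R _ c); apply (hmul_distr R c b i); eauto. }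
      assert (Hbc : add (mul b d) (mul b j) (mul b c)).
      { apply (hmul_distr R b d j); eauto. }
      destruct (hadd_assocLR _ _ _ _ _ Hbc Hca) as [k [Hk Hbdk]].
      exists k; split; [apply (hyperidealD I HI (mul b j) (mul i c)) |]; auto.
      * apply (hyperidealM I HI); exact Ij.
      * rewrite hmul_comm; apply (hyperidealM I HI); exact Ii.
Qed.

Section StronglyRegular.
Variable rho : R -> R -> Prop.
Hypothesis Hrho : strongly_regular R rho.

Lemma strongly_regular_sumlist a s x y :
  sumlist R a s x -> sumlist R a s y -> rho x y.
Proof.
  destruct Hrho as [[Hrefl _] Hcompat].
  revert a x y; induction s as [|b s IH]; intros a x y Hx Hy.
  - unfold sumlist, singleton in Hx, Hy; subst; apply Hrefl.
  - destruct Hx as [a1 [t [Ha1 [Ht Hx]]]], Hy as [a2 [t' [Ha2 [Ht' Hy]]]].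
    unfold singleton in Ha1, Ha2; subst.
    exact (proj1 (Hcompat a a t t' (Hrefl a) (IH _ _ _ Ht Ht')) x y Hx Hy).
Qed.

Lemma gamma_star_sub : rel_incl R (gamma_star R) rho.
Proof.
  destruct Hrho as [[_ [_ Htrans]] _].
  intros x y; induction 1 as [x y [U [[p [ps HU]] [Ux Uy]]] | x y z _ IHxy _ IHyz].
  - apply (strongly_regular_sumlist (hprod R p) (map (hprod R) ps)); apply HU; auto.
  - eauto.
Qed.

Lemma strongly_regular_class0 : gamma_closed (rho zero).
Proof.
  destruct Hrho as [[Hrefl [Hsym Htrans]] Hcompat].
  split; [split; [| split] |].
  - exists zero; apply Hrefl.
  - intros a b Ha Hb w Hw.
    assert (Hnb : rho (neg b) zero).
    { apply (Hcompat zero b (neg b) (neg b) Hb (Hrefl _)); [apply hadd0l | apply hneg_inv]. }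
    assert (Hnbw : rho (neg b) w).
    { apply (Hcompat zero a (neg b) (neg b) Ha (Hrefl _)); [apply hadd0l | exact Hw]. }
    eauto.
  - intros r a Ha; rewrite <- (hmul0r r); exact (proj2 (Hcompat r r zero a (Hrefl r) Ha)).
  - intros x; apply gamma_star_sub.
Qed.

Lemma strongly_regularP x y : rho x y <-> exists i, rho zero i /\ add y i x.
Proof.
  destruct Hrho as [[Hrefl [Hsym _]] Hcompat]; split.
  - intros Hxy; destruct (hadd_nonempty R (neg y) x) as [i Hi]; exists i; split.
    + apply (Hcompat y x (neg y) (neg y) (Hsym _ _ Hxy) (Hrefl _));
        [apply hneg_inv | apply hadd_comm, Hi].
    + rewrite <- (hnegK y) at 1; apply (hadd_revers R _ _ _ Hi).
  - intros [i [Hi Hyix]]; apply Hsym, (Hcompat y y zero i (Hrefl y) Hi);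
      [apply hadd0r | exact Hyix].
Qed.
End StronglyRegular.

Lemma rho_of_class0 rho : strongly_regular R rho ->
  forall x y, rho_of R (rho zero) x y <-> rho x y.
Proof.
  intros Hrho x y.
  rewrite (rho_ofP _ (proj1 (strongly_regular_class0 rho Hrho))), strongly_regularP
    by exact Hrho.
  reflexivity.
Qed.

Lemma class0_incl rho sigma : strongly_regular R rho -> strongly_regular R sigma ->
  rel_incl R rho sigma <-> set_incl R (rho zero) (sigma zero).
Proof.
  intros Hrho Hsigma; split.
  - intros H x; apply H.
  - intros H x y Hxy.
    apply (strongly_regularP rho Hrho) in Hxy; destruct Hxy as [i [Hi Hyix]].
    apply (strongly_regularP sigma Hsigma); eauto.
Qed.

Definition set_meet (F : subset R -> Prop) : subset R := fun x => forall I, F I -> I x.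

Definition rel_meet (F : (R -> R -> Prop) -> Prop) : R -> R -> Prop :=
  fun x y => forall rho, F rho -> rho x y.

Lemma gamma_closed_meet F : (forall I, F I -> gamma_closed I) -> gamma_closed (set_meet F).
Proof.
  intros HF; split; [split; [| split] |].
  - exists zero; intros I FI; apply hyperideal0, (proj1 (HF I FI)).
  - intros a b Ia Ib w Hw I FI; destruct (HF I FI) as [[_ [Hsub _]] _].
    exact (Hsub a b (Ia I FI) (Ib I FI) w Hw).
  - intros r a Ia I FI; apply hyperidealM; [apply (proj1 (HF I FI)) | exact (Ia I FI)].
  - intros x Hx I FI; apply (HF I FI), Hx.
Qed.

Lemma strongly_regular_meet F : (forall rho, F rho -> strongly_regular R rho) ->
  strongly_regular R (rel_meet F).
Proof.
  intros HF; split; [split; [| split] |].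
  - intros x rho Frho; destruct (HF rho Frho) as [[Hrefl _] _]; apply Hrefl.
  - intros x y H rho Frho; destruct (HF rho Frho) as [[_ [Hsym _]] _]; apply Hsym, H, Frho.
  - intros x y z Hxy Hyz rho Frho; destruct (HF rho Frho) as [[_ [_ Htrans]] _].
    exact (Htrans x y z (Hxy rho Frho) (Hyz rho Frho)).
  - intros a b c d Hab Hcd; split.
    + intros u v Hu Hv rho Frho; destruct (HF rho Frho) as [_ Hcompat].
      exact (proj1 (Hcompat _ _ _ _ (Hab rho Frho) (Hcd rho Frho)) u v Hu Hv).
    + intros rho Frho; destruct (HF rho Frho) as [_ Hcompat].
      exact (proj2 (Hcompat _ _ _ _ (Hab rho Frho) (Hcd rho Frho))).
Qed.
End Hyperring.

Theorem mainTheorem17 (R : hyperring) :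
  (* f is well defined: rho(0) is a hyperideal containing gamma*(0) *)
  (forall rho : R -> R -> Prop, strongly_regular R rho ->
     hyperideal R (rho (hzero R)) /\ set_incl R (gamma_star0 R) (rho (hzero R))) /\
  (* g is well defined and f o g = id *)
  (forall I : subset R, hyperideal R I -> set_incl R (gamma_star0 R) I ->
     strongly_regular R (rho_of R I) /\ (forall x, rho_of R I (hzero R) x <-> I x)) /\
  (* g o f = id *)
  (forall rho : R -> R -> Prop, strongly_regular R rho ->
     forall x y, rho_of R (rho (hzero R)) x y <-> rho x y) /\
  (* f is an order isomorphism (monotone and order-reflecting) *)
  (forall rho sigma : R -> R -> Prop, strongly_regular R rho -> strongly_regular R sigma ->
     (rel_incl R rho sigma <-> set_incl R (rho (hzero R)) (sigma (hzero R)))) /\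
  (* both posets are complete lattices *)
  (forall S : (R -> R -> Prop) -> Prop,
     (forall rho, S rho -> strongly_regular R rho) ->
     (exists m, is_lub _ (rel_incl R) (strongly_regular R) S m) /\
     (exists m, is_glb _ (rel_incl R) (strongly_regular R) S m)) /\
  (forall S : subset R -> Prop,
     (forall I, S I -> hyperideal R I /\ set_incl R (gamma_star0 R) I) ->
     (exists m, is_lub _ (set_incl R) (fun I => hyperideal R I /\ set_incl R (gamma_star0 R) I) S m) /\
     (exists m, is_glb _ (set_incl R) (fun I => hyperideal R I /\ set_incl R (gamma_star0 R) I) S m)).
Proof.
  split; [| split; [| split; [| split; [| split]]]].
  - exact (strongly_regular_class0 R).
  - intros I HI HgI; split.
    + apply rho_of_strongly_regular; split; assumption.
    + apply rho_of_zero, HI.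
  - exact (rho_of_class0 R).
  - exact (class0_incl R).
  - apply (meet_closed_complete _ _ (rel_meet R)); [firstorder | firstorder |].
    apply strongly_regular_meet.
  - apply (meet_closed_complete _ _ (set_meet R)); [firstorder | firstorder |].
    apply gamma_closed_meet.
Qed.
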